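(* Let $\mathcal{H}=\operatorname{coh}\mathbb{X}$ for a weighted projective line of weight type $(p_1,\ldots,p_t)$, where $p_1,\ldots,p_r$ are even and $p_{r+1},\ldots,p_t$ are odd, and $\mathcal{C}=\mathcal{C}(\mathcal{H})$. (i) If $r\ge1$, then the linear forms (on $\overline{K}_0(\mathcal{C})$ induced by) $\langle\hat s_1,-\rangle,\ \langle\tilde s_2-\tilde s_1,-\rangle,\ldots,\langle\tilde s_r-\tilde s_1,-\rangle$ form a $\mathbb{Z}$-basis of $\overline{K}_0(\mathcal{C})^*=\operatorname{Hom}(\overline{K}_0(\mathcal{C}),\mathbb{Z})$, where $\hat s_1=\sum_{j=0}^{p_1-1}(-1)^j\Phi^js_1$ and $\tilde s_i=\sum_{j=0}^{p_i/2-1}\Phi^{2j}s_i$. (ii) If $r=0$, then $\operatorname{rk}_2$ and $\deg_2$ form a $\mathbb{Z}_2$-basis of $\overline{K}_0(\mathcal{C})^*=\operatorname{Hom}(\overline{K}_0(\mathcal{C}),\mathbb{Z}_2)$.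
   Context: $k$ algebraically closed; $\mathcal{H}=\operatorname{coh}\mathbb{X}$ hereditary abelian with AR translation $\tau$ and Serre duality; finite length objects form exceptional tubes of ranks $p_1,\ldots,p_t$ and homogeneous tubes of rank $1$. $L$ structure sheaf, $a=[L]$; $S_i$ ($1\le i\le t$) the unique simple in the $i$-th exceptional tube with $\operatorname{Hom}(L,S_i)\ne0$, $s_i=[S_i]$; $S_0$ simple in a homogeneous tube, $s_0=[S_0]$. Euler form $\langle[X],[Y]\rangle=\dim\operatorname{Hom}(X,Y)-\dim\operatorname{Ext}^1(X,Y)$; Coxeter transformation $\Phi[X]=[\tau X]$ (so $\Phi^{p_i}s_i=s_i$). $\operatorname{rk}(x)=\langle x,s_0\rangle$, $\deg(x)=\sum_{j=0}^{p-1}\langle\Phi^ja,x-\operatorname{rk}(x)a\rangle$, $p=\operatorname{lcm}(p_i)$; $\operatorname{rk}_2,\deg_2$ their reductions mod $2$ on $K_0(\mathcal{H})\otimes\mathbb{Z}_2$. With $\mathcal{D}=D^b(\mathcal{H})$, $F=\tau^{-1}\Sigma$, the cluster category $\mathcal{C}=\mathcal{D}/F^{\mathbb{Z}}$ has $\operatorname{Hom}_{\mathcal{C}}(X,Y)=\bigoplus_i\operatorname{Hom}_{\mathcal{D}}(X,F^iY)$ and projection $\pi$; $\overline{K}_0(\mathcal{C})$ is the Grothendieck group with respect to induced triangles (images under $\pi$ of exact triangles), equal to $\operatorname{Coker}(1+\Phi)$ on $K_0(\mathcal{H})$; linear forms on $K_0(\mathcal{H})$ (resp. mod 2) killing $\operatorname{Im}(1+\Phi)$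 are identified with linear forms on $\overline{K}_0(\mathcal{C})$. *)

From HB Require Import structures.
From mathcomp Require Import all_boot all_order all_algebra.
Set Implicit Arguments. Unset Strict Implicit. Unset Printing Implicit Defensive.
Import GRing.Theory Num.Theory.
Local Open Scope ring_scope.

(* Generators of K_0(H): a = [L], s_0 = [S_0], and s_{i,j} = [tau^j S_i]
   (i indexes the t exceptional tubes, j : 'I_(p i)); they satisfy the
   relations s_0 = \sum_j s_{i,j} for every i.  K_0(H) is the quotient of the
   free abelian group on gen t p by these relations. *)
Inductive gen (t : nat) (p : 'I_t -> nat) :=
  | Ga | Gs0 | Gs (i : 'I_t) (j : 'I_(p i)).
Arguments gen : clear implicits.
Arguments Ga {t p}. Arguments Gs0 {t p}. Arguments Gs {t p}.

Definition gen_code t p (g : gen t p) : (bool + {i : 'I_t & 'I_(p i)})%type :=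
  match g with Ga => inl true | Gs0 => inl false | Gs i j => inr (Tagged _ j) end.
Definition gen_decode t p (c : (bool + {i : 'I_t & 'I_(p i)})%type) : gen t p :=
  match c with inl true => Ga | inl false => Gs0 | inr u => Gs (tag u) (tagged u) end.
Lemma gen_codeK t p : cancel (@gen_code t p) (@gen_decode t p).
Proof. by case. Qed.
HB.instance Definition _ t p := Finite.copy (gen t p) (can_type (@gen_codeK t p)).

Section Model.
Variables (t : nat) (p : 'I_t -> nat).
Local Notation gen := (gen t p).

(* Elements of K_0(H), represented by integer combinations of generators. *)
Definition delta (g : gen) : gen -> int := fun h => (h == g)%:Z.

Definition eulerG (g h : gen) : int :=
  match g, h with
  | Ga, Ga => 1
  | Ga, Gs0 => 1
  | Gs0, Ga => -1
  | Gs0, Gs0 => 0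
  | Ga, Gs _ j => (val j == 0)%N%:Z
  | Gs i j, Ga => - ((val j).+1 == p i)%:Z
  | Gs0, Gs _ _ => 0
  | Gs _ _, Gs0 => 0
  | Gs i j, Gs k l =>
      if i == k then (val j == val l)%:Z - (val l == ((val j).+1 %% p i)%N)%:Z
      else 0
  end.

Definition euler (x y : gen -> int) : int :=
  \sum_g \sum_h x g * y h * eulerG g h.

(* Coxeter transformation Phi = [tau -] on generators:
   Phi a = [L(omega)] = a + (t-2) s0 - \sum_i s_{i,0},
   Phi s0 = s0, Phi s_{i,j} = s_{i,j+1 mod p_i}. *)
Definition coxG (g : gen) : gen -> int :=
  match g with
  | Ga => fun h => match h with
                   | Ga => 1
                   | Gs0 => t%:Z - 2
                   | Gs _ l => - (val l == 0)%N%:Z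
                   end
  | Gs0 => delta Gs0
  | Gs i j => fun h => match h with
                       | Gs k l => ((k == i) && (val l == ((val j).+1 %% p i)%N))%:Z
                       | _ => 0
                       end
  end.

Definition cox (x : gen -> int) : gen -> int :=
  fun h => \sum_g x g * coxG g h.

Definition simple_s (i : 'I_t) : gen -> int :=
  fun h => match h with
           | Gs k l => ((k == i) && (val l == 0)%N)%:Z
           | _ => 0
           end.

Definition hat_s (i : 'I_t) : gen -> int :=
  fun h => \sum_(j < p i) (-1) ^+ j * iter j cox (simple_s i) h.

Definition tilde_s (i : 'I_t) : gen -> int :=
  fun h => \sum_(j < (p i)./2) iter (2 * j) cox (simple_s i) h.

Definition pairing (v : gen -> int) : gen -> int := fun g => euler v (delta g).

Definition rk (x : gen -> int) : int := euler x (delta Gs0).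
Definition plcm : nat := \big[lcmn/1%N]_(i < t) p i.
Definition deg (x : gen -> int) : int :=
  \sum_(j < plcm) euler (iter j cox (delta Ga)) (fun h => x h - rk x * delta Ga h).

Definition rk2 : gen -> 'Z_2 := fun g => (rk (delta g))%:~R.
Definition deg2 : gen -> 'Z_2 := fun g => (deg (delta g))%:~R.

Definition evf (R : nzRingType) (f : gen -> R) (x : gen -> int) : R :=
  \sum_g (x g)%:~R * f g.

(* f : gen -> R defines an element of Hom(Kbar_0(C), R):
   it respects the relations of K_0(H) and kills Im(1 + Phi). *)
Definition is_Cbar_form (R : nzRingType) (f : gen -> R) : Prop :=
  (forall i : 'I_t, f Gs0 = \sum_(j < p i) f (Gs i j)) /\
  (forall g : gen, evf f (delta g) + evf f (cox (delta g)) = 0).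

Definition is_Cbar_dual_basis (R : nzRingType) (I : finType) (b : I -> gen -> R)
  : Prop :=
  (forall k, is_Cbar_form (b k)) /\
  (forall f : gen -> R, is_Cbar_form f ->
     exists! c : {ffun I -> R}, forall g, f g = \sum_k c k * b k g).

End Model.

(* A linear form f on K_0(H) kills Im(1 + Phi) iff f(tau^(j+1) S_i) = -f(tau^j S_i),
   2 f(s_0) = 0 and 2 f(a) + (t - 2) f(s_0) = sum_i f(s_i); it is well defined iff
   f(s_0) = sum_j f(tau^j S_i) for every i.  Over Z this forces f(s_0) = 0 and
   f(tau^j S_i) = (-1)^j c_i with c_i = 0 for p_i odd, so f is determined by its
   parameters (f(a), c) subject to 2 f(a) = sum_i c_i.  The forms <hat s_1,-> and
   <tilde s_k - tilde s_1,-> have parameters (1, 2 e_1) and (0, e_k - e_1), and every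
   admissible (a, c) is uniquely a (1, 2 e_1) + sum_(k >= 2) c_k (0, e_k - e_1).
   Over Z_2 with all p_i odd the conditions reduce to f(tau^j S_i) = f(s_0), so f is
   freely determined by (f(a), f(s_0)); rk_2 and deg_2 take the values (1, 0) and
   (0, 1) there, since p and p / p_i are odd. *)

From mathcomp Require Import all_boot all_order all_algebra ring zify.
Import GRing.Theory Num.Theory.
Local Open Scope ring_scope.
Set Implicit Arguments. Unset Strict Implicit. Unset Printing Implicit Defensive.

Lemma sum_eq_mull (R : nzSemiRingType) (I : finType) (i0 : I) (F : I -> R) :
  \sum_i (i == i0)%:R * F i = F i0.
Proof.
rewrite (bigD1 i0) //= eqxx mul1r big1 ?addr0 // => i /negbTE ->.
by rewrite mul0r.
Qed.

Lemma sum_eq_natr (R : nzSemiRingType) (I : finType) (i0 : I) :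
  \sum_i (i == i0)%:R = 1 :> R.
Proof.
by rewrite -[RHS](sum_eq_mull i0 (fun _ => 1)); apply: eq_bigr => i _; rewrite mulr1.
Qed.

Section Generators.
Variables (t : nat) (p : 'I_t -> nat).
Local Notation gen := (gen t p).
Implicit Types (x y : gen -> int) (g h : gen).

Lemma gen_decodeK : cancel (@gen_decode t p) (@gen_code t p).
Proof. by case=> [[]|[i j]]. Qed.

Lemma sum_gen (R : nmodType) (F : gen -> R) :
  \sum_g F g = F Ga + F Gs0 + \sum_(i < t) \sum_(j < p i) F (Gs i j).
Proof.
rewrite (reindex (@gen_decode t p)); last first.
  by apply: onW_bij; exists (@gen_code t p); [apply: gen_decodeK | apply: gen_codeK].
rewrite big_sumType /= big_bool /=.
by rewrite (sig_big_dep xpredT (fun _ _ => true) (fun i j => F (Gs i j))).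
Qed.

Lemma delta_intr (R : nzRingType) g h : (delta g h)%:~R = (h == g)%:R :> R.
Proof. by []. Qed.

Lemma sum_delta_mull g (F : gen -> int) : \sum_h delta g h * F h = F g.
Proof. by rewrite -[RHS](sum_eq_mull g); apply: eq_bigr => h _; rewrite natz. Qed.

Lemma cox_delta g h : cox (delta g) h = coxG g h.
Proof. exact: sum_delta_mull. Qed.

Lemma cox_ext x y : x =1 y -> cox x =1 cox y.
Proof. by move=> xy h; apply: eq_bigr => g _; rewrite xy. Qed.

Lemma evf_delta (R : nzRingType) (f : gen -> R) g : evf f (delta g) = f g.
Proof. by rewrite /evf; under eq_bigr do rewrite delta_intr; apply: sum_eq_mull. Qed.

Lemma evf_cox_delta (R : nzRingType) (f : gen -> R) g :
  evf f (cox (delta g)) = \sum_h (coxG g h)%:~R * f h.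
Proof. by apply: eq_bigr => h _; rewrite cox_delta. Qed.

Lemma sum_coxG_Ga (R : nzRingType) (f : gen -> R) :
  \sum_h (coxG Ga h)%:~R * f h = f Ga + (t%:Z - 2)%:~R * f Gs0
    - \sum_(i < t) \sum_(j < p i) (val j == 0)%:R * f (Gs i j).
Proof.
rewrite sum_gen /= mul1r; congr (_ + _).
rewrite -sumrN; apply: eq_bigr => i _; rewrite -sumrN; apply: eq_bigr => j _.
by rewrite mulrNz mulNr.
Qed.

Lemma sum_coxG_Gs0 (R : nzRingType) (f : gen -> R) :
  \sum_h (coxG Gs0 h)%:~R * f h = f Gs0.
Proof. by under eq_bigr do rewrite delta_intr; apply: sum_eq_mull. Qed.

Lemma sum_coxG_Gs (R : nzRingType) (f : gen -> R) i j :
  \sum_h (coxG (Gs i j) h)%:~R * f h = f (Gs i (ordS j)).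
Proof.
rewrite sum_gen /= !mul0r !add0r (bigD1 i) //= [X in _ + X]big1 ?addr0; last first.
  by move=> k nki; apply: big1 => l _; rewrite (negbTE nki) mul0r.
rewrite -[RHS](sum_eq_mull (ordS j) (fun l => f (Gs i l))).
by apply: eq_bigr => l _; rewrite eqxx; reflexivity.
Qed.

Lemma Cbar_formE (R : nzRingType) (f : gen -> R) :
  is_Cbar_form f <->
  [/\ forall i, f Gs0 = \sum_(j < p i) f (Gs i j),
      f Ga + (f Ga + (t%:Z - 2)%:~R * f Gs0
        - \sum_(i < t) \sum_(j < p i) (val j == 0)%:R * f (Gs i j)) = 0,
      f Gs0 + f Gs0 = 0 &
      forall i j, f (Gs i j) + f (Gs i (ordS j)) = 0].
Proof.
have cox_rel g : evf f (delta g) + evf f (cox (delta g)) =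
    f g + \sum_h (coxG g h)%:~R * f h by rewrite evf_delta evf_cox_delta.
split=> [[rel_s0 rel_cox] | [rel_s0 rel_a rel_s0' rel_s]].
  split=> // [|| i j];
    [have := rel_cox Ga | have := rel_cox Gs0 | have := rel_cox (Gs i j)];
  by rewrite cox_rel ?sum_coxG_Ga ?sum_coxG_Gs0 ?sum_coxG_Gs.
split=> // -[|| i j]; rewrite cox_rel.
- by rewrite sum_coxG_Ga.
- by rewrite sum_coxG_Gs0.
- by rewrite sum_coxG_Gs.
Qed.

Lemma Cbar_form_ext (R : nzRingType) (f f' : gen -> R) :
  f =1 f' -> is_Cbar_form f -> is_Cbar_form f'.
Proof.
move=> ff' [rel_s0 rel_cox].
have evf_ext x : evf f x = evf f' x by apply: eq_bigr => g _; rewrite ff'.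
split=> [i | g]; last by rewrite -!evf_ext.
by rewrite -ff' (rel_s0 i); apply: eq_bigr => j _; rewrite ff'.
Qed.

End Generators.

Lemma odd_pred n : (0 < n)%N -> odd n.-1 = ~~ odd n.
Proof. by case: n => // n _; rewrite /= negbK. Qed.

Lemma odd_ordS n (j : 'I_n) : ~~ odd n -> odd (ordS j) = ~~ odd j.
Proof.
case: j => m lt_mn /= even_n.
have [lt_m1n | le_nm1] := ltnP m.+1 n; first by rewrite modn_small.
have n_eq : n = m.+1 by apply/eqP; rewrite eqn_leq le_nm1 lt_mn.
by move: even_n; rewrite n_eq modnn /= negbK => ->.
Qed.

Lemma signr_ordS (R : nzRingType) n (j : 'I_n) :
  ~~ odd n -> (-1) ^+ ordS j = - (-1) ^+ j :> R.
Proof. by move=> even_n; rewrite -signr_odd odd_ordS // signrN signr_odd. Qed.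

Lemma signr_ord_pred (R : nzRingType) n (j : 'I_n) :
  ~~ odd n -> (-1) ^+ ord_pred j = - (-1) ^+ j :> R.
Proof.
by move=> even_n; rewrite -[in RHS](ord_predK j) signr_ordS // opprK.
Qed.

Lemma sum_signr_ord n : ~~ odd n -> \sum_(j < n) (-1) ^+ j = 0 :> int.
Proof.
move=> even_n; set S := (X in X = 0).
have : S = - S.
  rewrite {1}/S (reindex (@ordS n)) /=; last exact: onW_bij (ordS_bij n).
  by rewrite -sumrN; apply: eq_bigr => j _; rewrite signr_ordS.
lia.
Qed.

Section IntegralForms.
Variables (t : nat) (p : 'I_t -> nat).
Hypothesis p_gt0 : forall i, (0 < p i)%N.
Local Notation gen := (gen t p).
Implicit Types (f : gen -> int) (a : int) (c : 'I_t -> int).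

Definition tube0 i : 'I_(p i) := Ordinal (p_gt0 i).

Lemma sum_tube0 (R : nzRingType) i (F : 'I_(p i) -> R) :
  \sum_(j < p i) (val j == 0)%:R * F j = F (tube0 i).
Proof. by rewrite -(sum_eq_mull (tube0 i)). Qed.

Lemma tube_alternating (R : nzRingType) (f : gen -> R) i :
  (forall j, f (Gs i j) + f (Gs i (ordS j)) = 0) ->
  forall j : 'I_(p i), f (Gs i j) = (-1) ^+ j * f (Gs i (tube0 i)).
Proof.
move=> rel_s [m lt_mp]; elim: m lt_mp => [|m IHm] lt_m1p.
  by rewrite expr0 mul1r; congr (f (Gs i _)); apply: val_inj.
have lt_mp : (m < p i)%N by apply: ltnW.
rewrite [in LHS](_ : Ordinal lt_m1p = ordS (Ordinal lt_mp)); last first.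
  by apply: val_inj; rewrite /= modn_small.
move/eqP: (rel_s (Ordinal lt_mp)); rewrite addrC addr_eq0 => /eqP ->.
by rewrite IHm exprS mulN1r mulNr.
Qed.

Definition alt_form a c : gen -> int := fun g =>
  match g with Ga => a | Gs0 => 0 | Gs i j => c i * (-1) ^+ j end.

Definition tube_head f i : int := f (Gs i (tube0 i)).

Lemma Cbar_form_alt f : is_Cbar_form f ->
  [/\ f =1 alt_form (f Ga) (tube_head f),
      forall i, odd (p i) -> tube_head f i = 0 &
      f Ga *+ 2 = \sum_i tube_head f i].
Proof.
case/Cbar_formE => _ rel_a rel_s0 rel_s.
have f_s0 : f Gs0 = 0 by lia.
have f_s := fun i => tube_alternating (rel_s i).
split=> [[|| i j] // | i odd_p | ]; first by rewrite /= f_s mulrC.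
  have lt_p1p : ((p i).-1 < p i)%N by rewrite prednK.
  have last_succ : ordS (Ordinal lt_p1p) = tube0 i.
    by apply: val_inj; rewrite /= prednK ?modnn.
  have := rel_s i (Ordinal lt_p1p); rewrite last_succ f_s /= -signr_odd.
  rewrite odd_pred // odd_p /= expr0 mul1r /tube_head; lia.
move: rel_a; rewrite f_s0 mulr0 addr0.
under eq_bigr do rewrite sum_tube0.
by rewrite /tube_head addrA -mulr2n => /eqP; rewrite subr_eq0 => /eqP.
Qed.

Lemma alt_form_Cbar a c : (forall i, odd (p i) -> c i = 0) ->
  a *+ 2 = \sum_i c i -> is_Cbar_form (alt_form a c).
Proof.
move=> c_odd a2; apply/Cbar_formE; split=> /= [i | | | i j].
- have [/c_odd -> | even_p] := boolP (odd (p i)).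
    by rewrite big1 // => j _; rewrite mul0r.
  by rewrite -mulr_sumr sum_signr_ord ?mulr0.
- under eq_bigr do rewrite sum_tube0 /= expr0 mulr1.
  by rewrite mulr0 addr0 -a2 addrA -mulr2n subrr.
- by rewrite addr0.
- have [/c_odd -> | even_p] := boolP (odd (p i)); first by rewrite !mul0r addr0.
  by rewrite signr_ordS // mulrN subrr.
Qed.

Lemma sum_alt_form (I : finType) (d : I -> int) (a : I -> int) (c : I -> 'I_t -> int) :
  (fun g => \sum_k d k * alt_form (a k) (c k) g)
    =1 alt_form (\sum_k d k * a k) (fun i => \sum_k d k * c k i).
Proof.
case=> [|| i j] //=; first by rewrite big1 // => k _; rewrite mulr0.
by rewrite mulr_suml; apply: eq_bigr => k _; rewrite mulrA.
Qed.

Lemma alt_form_eq a a' c c' :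
  alt_form a c =1 alt_form a' c' <-> a = a' /\ c =1 c'.
Proof.
split=> [eq_ac | [-> eq_c] [|| i j] //=]; last by rewrite eq_c.
split=> [| i]; first exact: eq_ac Ga.
by have := eq_ac (Gs i (tube0 i)); rewrite /= expr0 !mulr1.
Qed.

End IntegralForms.

Lemma sum_ordS_eq_mull (R : nzSemiRingType) n (l : 'I_n) (F : 'I_n -> R) :
  \sum_j (l == ordS j)%:R * F j = F (ord_pred l).
Proof.
rewrite -(sum_eq_mull (ord_pred l)); apply: eq_bigr => j _.
by rewrite eq_sym (can2_eq (@ordSK n) (@ord_predK n)).
Qed.

Section Pairing.
Variables (t : nat) (p : 'I_t -> nat).
Local Notation gen := (gen t p).
Implicit Types (x y : gen -> int).

Lemma pairingE x g : pairing x g = \sum_h x h * eulerG h g.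
Proof.
apply: eq_bigr => h _; rewrite -[RHS](sum_delta_mull g (fun k => x h * eulerG h k)).
by apply: eq_bigr => k _; rewrite mulrCA mulrA.
Qed.

Lemma pairing_ext x y : x =1 y -> pairing x =1 pairing y.
Proof. by move=> xy g; rewrite !pairingE; apply: eq_bigr => h _; rewrite xy. Qed.

Lemma pairingB x y g :
  pairing (fun h => x h - y h) g = pairing x g - pairing y g.
Proof. by rewrite !pairingE -sumrB; apply: eq_bigr => h _; rewrite mulrBl. Qed.

Lemma pairing_Gs0 x : pairing x Gs0 = x Ga.
Proof.
rewrite pairingE sum_gen /= mulr1 mulr0 addr0 big1 ?addr0 // => i _.
by apply: big1 => j _; rewrite mulr0.
Qed.

Lemma pairing_Gs x i l :
  pairing x (Gs i l) = x Ga * (val l == 0)%:R + x (Gs i l) - x (Gs i (ord_pred l)).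
Proof.
rewrite pairingE sum_gen /= mulr0 addr0 -addrA; congr (_ + _); first by rewrite natz.
rewrite (bigD1 i) //= [X in _ + X]big1 ?addr0 => [|k ne_ki]; last first.
  by apply: big1 => j _; rewrite (negbTE ne_ki) mulr0.
rewrite eqxx; under eq_bigr do rewrite mulrBr.
rewrite sumrB -(sum_eq_mull l (fun j => x (Gs i j))).
rewrite -(sum_ordS_eq_mull l (fun j => x (Gs i j))).
by congr (_ - _); apply: eq_bigr => j _; rewrite mulrC natz.
Qed.

Lemma cox_Ga x : cox x Ga = x Ga.
Proof.
rewrite /cox sum_gen /= mulr1 mulr0 addr0 big1 ?addr0 // => i _.
by apply: big1 => j _; rewrite mulr0.
Qed.

Lemma cox_Gs0 x : cox x Gs0 = x Ga * (t%:Z - 2) + x Gs0.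
Proof.
rewrite /cox sum_gen /= /delta eqxx mulr1 big1 ?addr0 // => i _.
by apply: big1 => j _; rewrite mulr0.
Qed.

Lemma cox_Gs x i l :
  cox x (Gs i l) = x (Gs i (ord_pred l)) - x Ga * (val l == 0)%:R.
Proof.
rewrite /cox sum_gen /= mulr0 addr0 addrC mulrN natz; congr (_ - _).
rewrite (bigD1 i) //= [X in _ + X]big1 ?addr0 => [|k ne_ki]; last first.
  by apply: big1 => j _; rewrite eq_sym (negbTE ne_ki) mulr0.
rewrite -(sum_ordS_eq_mull l (fun j => x (Gs i j))).
by apply: eq_bigr => j _; rewrite eqxx mulrC natz.
Qed.

Lemma pairing_cox_Gs x i l :
  pairing (cox x) (Gs i l) = pairing x (Gs i (ord_pred l)).
Proof. by rewrite !pairing_Gs !cox_Gs cox_Ga; ring. Qed.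

End Pairing.

Lemma ord_pred_eq_mod n (l : 'I_n) j :
  (val (ord_pred l) == j %% n)%N = (val l == j.+1 %% n)%N.
Proof.
have n_gt0 : (0 < n)%N by apply: leq_ltn_trans (ltn_ord l).
pose u : 'I_n := Ordinal (ltn_pmod j n_gt0).
have -> : (j.+1 %% n)%N = ordS u by rewrite /= -addn1 -modnDml addn1.
by rewrite -[(j %% n)%N]/(val u) !val_eqE (can2_eq (@ord_predK n) (@ordSK n)).
Qed.

Lemma odd_ord_pred n (j : 'I_n) : ~~ odd n -> odd (ord_pred j) = ~~ odd j.
Proof. by move=> even_n; rewrite -[in RHS](ord_predK j) odd_ordS // negbK. Qed.

Section TubeVectors.
Variables (t : nat) (p : 'I_t -> nat).
Local Notation gen := (gen t p).

Definition tube_vec i (w : nat -> int) : gen -> int := fun h =>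
  match h with Gs k l => (k == i)%:R * w l | _ => 0 end.

Lemma tube_vec_Gs i w k l : tube_vec i w (Gs k l) = (k == i)%:R * w l.
Proof. by []. Qed.

Lemma iter_cox_simple i j :
  iter j (@cox t p) (simple_s i) =1 tube_vec i (fun n => (n == j %% p i)%N%:R).
Proof.
elim: j => [|j IHj] [|| k l] //=.
- by rewrite mod0n; case: (k == i); case: (val l == 0)%N.
- by rewrite (cox_ext IHj) cox_Ga.
- by rewrite (cox_ext IHj) cox_Gs0 /= mul0r add0r.
rewrite (cox_ext IHj) cox_Gs tube_vec_Gs mul0r subr0.
case: eqP => [<- | _]; last by rewrite !mul0r.
by rewrite ord_pred_eq_mod.
Qed.

Lemma hat_s_tube i : hat_s i =1 tube_vec i (fun n => (-1) ^+ n).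
Proof.
move=> h; rewrite /hat_s; under eq_bigr do rewrite iter_cox_simple.
case: h => [|| k l] /=; try by rewrite big1 // => j _; rewrite mulr0.
case: eqP => [<- | _]; last by rewrite mul0r big1 // => j _; rewrite mul0r mulr0.
rewrite mul1r -(sum_eq_mull l (fun j => (-1) ^+ j)); apply: eq_bigr => j _.
by rewrite mul1r modn_small // mulrC eq_sym.
Qed.

Lemma tilde_s_tube i : ~~ odd (p i) ->
  tilde_s i =1 tube_vec i (fun n => (~~ odd n)%:R).
Proof.
move=> even_p h; rewrite /tilde_s; under eq_bigr do rewrite iter_cox_simple.
case: h => [|| k l] /=; try by rewrite big1.
case: eqP => [ki | _]; last by rewrite mul0r big1 // => j _; rewrite mul0r.
subst i; rewrite mul1r.
have p_eq : p k = (p k)./2.*2.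
  by rewrite -[in LHS](odd_double_half (p k)) (negbTE even_p) add0n.
have even_mod (j : 'I_(p k)./2) : (2 * j %% p k)%N = (2 * j)%N.
  by rewrite modn_small // {2}p_eq -mul2n ltn_pmul2l.
have [odd_l | even_l] := boolP (odd l).
  rewrite big1 // => j _; rewrite mul1r even_mod.
  by apply/eqP; rewrite pnatr_eq0 eqb0; apply: contraTneq odd_l => ->; rewrite oddM.
have l_eq : l = l./2.*2 :> nat.
  by rewrite -[in LHS](odd_double_half l) (negbTE even_l) add0n.
have lt_l2p : (l./2 < (p k)./2)%N by rewrite -ltn_double -l_eq -p_eq.
rewrite [RHS](_ : _ = \sum_j (j == Ordinal lt_l2p)%:R * 1); last by rewrite sum_eq_mull.
apply: eq_bigr => j _.
by rewrite mul1r mulr1 even_mod [in LHS]l_eq -mul2n eqn_mul2l /= eq_sym.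
Qed.

Lemma pairing_tube_vec_Ga i w : (0 < p i)%N ->
  pairing (tube_vec i w) Ga = - w (p i).-1.
Proof.
move=> p_gt0; rewrite pairingE sum_gen /= !mul0r !add0r.
rewrite (bigD1 i) //= [X in _ + X]big1 ?addr0 => [|k ne_ki]; last first.
  by apply: big1 => l _; rewrite (negbTE ne_ki) !mul0r.
have lt_p1p : ((p i).-1 < p i)%N by rewrite prednK.
rewrite -(sum_eq_mull (Ordinal lt_p1p) (fun l => - w l)); apply: eq_bigr => l _.
have -> : (l == Ordinal lt_p1p) = (l.+1 == p i)%N by rewrite -val_eqE /= -eqSS prednK.
by rewrite eqxx mul1r natz; ring.
Qed.

Lemma pairing_tube_vec_Gs i w k l :
  pairing (tube_vec i w) (Gs k l) = (k == i)%:R * (w l - w (ord_pred l)).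
Proof. by rewrite pairing_Gs /= mul0r add0r mulrBr. Qed.

End TubeVectors.

Lemma sum_mod_eq (R : nzSemiRingType) q d l : (l < d)%N ->
  \sum_(0 <= j < (q * d)%N) (j %% d == l)%N%:R = q%:R :> R.
Proof.
move=> lt_ld; rewrite big_nat_mul (eq_bigr (fun _ => 1)) ?sumr_const_nat ?subn0 // => i _.
rewrite -[(i * d)%N]add0n big_addn mulSn addnK big_mkord.
transitivity (\sum_(j < d) (j == Ordinal lt_ld)%:R * (1 : R)); last exact: sum_eq_mull.
by apply: eq_bigr => j _; rewrite addnC modnMDl modn_small // mulr1.
Qed.

Lemma odd_plcm t (p : 'I_t -> nat) : (forall i, odd (p i)) -> odd (plcm p).
Proof.
move=> odd_p; apply: (big_ind odd) => // a b odd_a odd_b.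
by apply: (@dvdn_odd _ (a * b)%N); rewrite ?oddM ?odd_a // dvdn_lcm dvdn_mulr ?dvdn_mull.
Qed.

Section Degree.
Variables (t : nat) (p : 'I_t -> nat).
Local Notation gen := (gen t p).
Local Notation X j := (iter j (@cox t p) (delta Ga)).

Lemma pairing_iter_cox_Gs0 j : pairing (X j) Gs0 = 1.
Proof. by rewrite pairing_Gs0; elim: j => //= j IHj; rewrite cox_Ga. Qed.

Lemma pairing_iter_cox_Gs j i l : pairing (X j) (Gs i l) = (j %% p i == l)%N%:R.
Proof.
elim: j l => [|j IHj] l /=.
  by rewrite pairing_Gs /delta eqxx /= mul1r addr0 subr0 mod0n eq_sym.
by rewrite pairing_cox_Gs IHj eq_sym ord_pred_eq_mod eq_sym.
Qed.

Lemma deg_delta g :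
  deg (delta g) = \sum_(j < plcm p) (pairing (X j) g - delta g Ga * pairing (X j) Ga).
Proof.
apply: eq_bigr => j _; rewrite -[rk _]/(pairing _ Gs0) pairing_Gs0.
rewrite /euler mulr_sumr -sumrB; apply: eq_bigr => h _.
by rewrite mulr_sumr -sumrB; apply: eq_bigr => k _; ring.
Qed.

Lemma deg_Ga : deg (@delta t p Ga) = 0.
Proof. by rewrite deg_delta big1 // => j _; rewrite mul1r subrr. Qed.

Lemma deg_Gs0 : deg (@delta t p Gs0) = (plcm p)%:R.
Proof.
rewrite deg_delta (eq_bigr (fun _ => 1)) ?sumr_const ?card_ord // => j _.
by rewrite mul0r subr0 pairing_iter_cox_Gs0.
Qed.

Lemma deg_Gs i l : deg (@delta t p (Gs i l)) = \sum_(0 <= j < plcm p) (j %% p i == l)%N%:R.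
Proof.
rewrite deg_delta big_mkord; apply: eq_bigr => j _.
by rewrite mul0r subr0 pairing_iter_cox_Gs.
Qed.

End Degree.

Lemma pchar_Z2 : 2 \in [pchar 'Z_2].
Proof. exact: pchar_Fp. Qed.

Lemma natr_Z2 n : n%:R = (odd n)%:R :> 'Z_2.
Proof. by rewrite -Zp_nat_mod // modn2. Qed.

Section Mod2Forms.
Variables (t : nat) (p : 'I_t -> nat).
Hypothesis odd_p : forall i, odd (p i).
Local Notation gen := (gen t p).
Implicit Types g : gen.

Let p_gt0 i : (0 < p i)%N := odd_gt0 (odd_p i).

Lemma Cbar_form_Z2 (f : gen -> 'Z_2) :
  is_Cbar_form f <-> forall i j, f (Gs i j) = f Gs0.
Proof.
have sum_tube i (x : 'Z_2) : \sum_(j < p i) x = x.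
  by rewrite sumr_const card_ord -mulr_natl natr_Z2 odd_p mul1r.
split=> [/Cbar_formE[rel_s0 _ _ rel_s] i j | f_s].
  have f_s i' j' : f (Gs i' j') = f (Gs i' (tube0 p_gt0 i')).
    by rewrite (tube_alternating p_gt0 (rel_s i')) oppr_pchar2 ?pchar_Z2 // expr1n mul1r.
  by rewrite (rel_s0 i) (eq_bigr _ (fun j' _ => f_s i j')) sum_tube f_s.
apply/Cbar_formE; split=> [i | | | i j].
- by rewrite (eq_bigr _ (fun j _ => f_s i j)) sum_tube.
- under eq_bigr do rewrite sum_tube0 f_s.
  rewrite sumr_const card_ord intrB -pmulrn mulrz_nat (pchar_Zp (_ : 1 < 2)%N) // subr0.
  by rewrite mulr_natl addrK addrr_pchar2 ?pchar_Z2.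
- by rewrite addrr_pchar2 ?pchar_Z2.
- by rewrite !f_s addrr_pchar2 ?pchar_Z2.
Qed.

Lemma rk2E g : rk2 g = (g == Ga)%:R.
Proof. by rewrite /rk2 -[rk _]/(pairing _ Gs0) pairing_Gs0 /delta eq_sym. Qed.

Lemma deg2E g : deg2 g = (g != Ga)%:R.
Proof.
rewrite /deg2; case: g => [|| i l].
- by rewrite deg_Ga.
- by rewrite deg_Gs0 mulrz_nat [LHS]natr_Z2 odd_plcm.
have /divnK plcm_eq : (p i %| plcm p)%N by apply: (biglcmn_sup i).
have odd_q : odd (plcm p %/ p i).
  by move: (odd_plcm odd_p); rewrite -{1}plcm_eq oddM => /andP[].
by rewrite deg_Gs -plcm_eq sum_mod_eq // mulrz_nat [LHS]natr_Z2 odd_q.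
Qed.

Lemma rk2_deg2_dual_basis :
  is_Cbar_dual_basis (fun k : 'I_2 => if val k == 0%N then @rk2 t p else @deg2 t p).
Proof.
set b := fun k : 'I_2 => _.
have b_sum (c : 'I_2 -> 'Z_2) g :
    \sum_k c k * b k g = c ord0 * (g == Ga)%:R + c (lift ord0 ord0) * (g != Ga)%:R.
  by rewrite !big_ord_recl big_ord0 addr0 /b /= rk2E deg2E.
split=> [k | f /Cbar_form_Z2 f_s].
  by apply/Cbar_form_Z2 => i j; rewrite /b; case: ifP; rewrite ?rk2E ?deg2E.
exists [ffun k => if val k == 0%N then f Ga else f Gs0]; split.
  move=> g; rewrite b_sum !ffunE /=.
  by case: g => [|| i j] /=; rewrite ?f_s ?mulr1 ?mulr0 ?addr0 ?add0r.
move=> c f_c; apply/ffunP => k; rewrite ffunE.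
have := f_c Ga; have := f_c Gs0; rewrite !b_sum /= ?mulr1 ?mulr0 ?addr0 ?add0r => -> ->.
by case: k => -[| [|//]] lt_k2 /=; congr (c _); apply: val_inj.
Qed.

End Mod2Forms.

Section EvenTubes.
Variables (t : nat) (p : 'I_t -> nat).
Hypothesis p_gt0 : forall i, (0 < p i)%N.
Local Notation gen := (gen t p).

Lemma pairing_hat_s i : ~~ odd (p i) ->
  pairing (@hat_s t p i) =1 alt_form 1 (fun k => (k == i)%:R * 2).
Proof.
move=> even_pi g; rewrite (pairing_ext (hat_s_tube i)).
case: g => [|| k l] /=.
- by rewrite pairing_tube_vec_Ga // -signr_odd odd_pred // even_pi expr1 opprK.
- by rewrite pairing_Gs0.
rewrite pairing_tube_vec_Gs; case: eqP => [ki | _]; last by rewrite !mul0r.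
subst i; rewrite signr_ord_pred //; ring.
Qed.

Lemma pairing_tilde_s i : ~~ odd (p i) ->
  pairing (@tilde_s t p i) =1 alt_form 0 (fun k => (k == i)%:R).
Proof.
move=> even_pi g; rewrite (pairing_ext (tilde_s_tube even_pi)).
case: g => [|| k l] /=.
- by rewrite pairing_tube_vec_Ga // odd_pred // even_pi oppr0.
- by rewrite pairing_Gs0.
rewrite pairing_tube_vec_Gs; case: eqP => [ki | _]; last by rewrite !mul0r.
subst i; rewrite odd_ord_pred // -signr_odd; by case: (odd l).
Qed.

Variables (r : nat) (le_rt : (r <= t)%N).
Hypothesis even_p : forall i : 'I_t, ~~ odd (p i) = (val i < r)%N.
Variable r_gt0 : (0 < r)%N.
Local Notation w := (widen_ord le_rt).
Local Notation k0 := (Ordinal r_gt0).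
Local Notation i1 := (w k0).

Lemma even_w k : ~~ odd (p (w k)).
Proof. by rewrite even_p /= ltn_ord. Qed.

Definition even_basis (k : 'I_r) : gen -> int :=
  if val k == 0%N then pairing (hat_s i1)
  else pairing (fun h => tilde_s (w k) h - tilde_s i1 h).

Definition even_coef (k : 'I_r) (i : 'I_t) : int :=
  if k == k0 then (i == i1)%:R * 2 else (i == w k)%:R - (i == i1)%:R.

Lemma even_basis_alt k : even_basis k =1 alt_form (k == k0)%:R (even_coef k).
Proof.
rewrite /even_basis /even_coef -[val k == 0%N]/(k == k0); case: (k == k0) => g.
  exact: pairing_hat_s (even_w k0) g.
rewrite pairingB !pairing_tilde_s ?even_w //.
by case: g => [|| i l] //=; rewrite ?subr0 // mulrBl.
Qed.

Lemma w_eq k k' : (w k == w k') = (k == k').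
Proof. by []. Qed.

Lemma eq_w_ge k (i : 'I_t) : (r <= i)%N -> (i == w k) = false.
Proof. by move=> le_ri; apply/eqP=> i_eq; move: le_ri; rewrite i_eq /= leqNgt ltn_ord. Qed.

Lemma even_basis_Cbar k : is_Cbar_form (even_basis k).
Proof.
apply: Cbar_form_ext (fun g => esym (even_basis_alt k g)) _.
apply: (alt_form_Cbar p_gt0) => [i odd_pi | ].
  have le_ri : (r <= i)%N by rewrite leqNgt -even_p odd_pi.
  by rewrite /even_coef !eq_w_ge // mul0r subr0; case: ifP.
rewrite /even_coef; case: (k == k0); first by rewrite -mulr_suml sum_eq_natr mul1r.
by rewrite sumrB !sum_eq_natr subrr.
Qed.

Lemma sum_even_coef_w (d : 'I_r -> int) k :
  k != k0 -> \sum_k' d k' * even_coef k' (w k) = d k.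
Proof.
move=> /negbTE nk; rewrite (bigD1 k0) //= (bigD1 k) ?nk //= big1 ?addr0.
  by rewrite /even_coef eqxx nk !w_eq nk eqxx mul0r mulr0 add0r subr0 mulr1.
move=> k' /andP[/negbTE nk'0 /negbTE nk'k].
by rewrite /even_coef nk'0 !w_eq eq_sym nk'k nk subrr mulr0.
Qed.

Lemma sum_even_coef_i1 (d : 'I_r -> int) :
  \sum_k d k * even_coef k i1 = d k0 *+ 2 - \sum_(k | k != k0) d k.
Proof.
rewrite (bigD1 k0) //= -sumrN /even_coef eqxx mul1r mulr_natr; congr (_ + _).
by apply: eq_bigr => k /negbTE nk; rewrite nk w_eq eq_sym nk eqxx sub0r mulrN1.
Qed.

Lemma sum_even_coef_odd (d : 'I_r -> int) (i : 'I_t) :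
  (r <= i)%N -> \sum_k d k * even_coef k i = 0.
Proof.
move=> le_ri; apply: big1 => k _.
by rewrite /even_coef !eq_w_ge // mul0r subr0; case: ifP; rewrite mulr0.
Qed.

Lemma sum_widen (F : 'I_t -> int) :
  (forall i : 'I_t, (r <= i)%N -> F i = 0) -> \sum_i F i = \sum_(k < r) F (w k).
Proof.
move=> F0; rewrite (bigID (fun i : 'I_t => (i < r)%N)) /= [X in _ + X]big1 ?addr0.
  exact: big_ord_narrow.
by move=> i; rewrite -leqNgt => /F0.
Qed.

Lemma sum_even_basis (d : 'I_r -> int) :
  (fun g => \sum_k d k * even_basis k g)
    =1 alt_form (d k0) (fun i => \sum_k d k * even_coef k i).
Proof.
move=> g; under eq_bigr do rewrite even_basis_alt; rewrite sum_alt_form.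
by under eq_bigr do rewrite mulrC; rewrite sum_eq_mull.
Qed.

Lemma even_basis_coords f (d : 'I_r -> int) : is_Cbar_form f ->
  (f =1 fun g => \sum_k d k * even_basis k g) <->
  d k0 = f Ga /\ forall k, k != k0 -> d k = tube_head p_gt0 f (w k).
Proof.
case/(Cbar_form_alt p_gt0) => f_alt head_odd f_Ga.
have head0 (i : 'I_t) : (r <= i)%N -> tube_head p_gt0 f i = 0.
  by move=> le_ri; apply: head_odd; rewrite -[odd _]negbK even_p -leqNgt.
split=> [f_d | [d0 d_k]].
  have alt_eq : alt_form (f Ga) (tube_head p_gt0 f)
      =1 @alt_form t p (d k0) (fun i => \sum_k d k * even_coef k i).
    by move=> g; rewrite -f_alt f_d sum_even_basis.
  have [-> c_eq] := (alt_form_eq p_gt0 _ _ _ _).1 alt_eq.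
  by split=> // k nk; rewrite c_eq sum_even_coef_w.
move=> g; rewrite f_alt sum_even_basis; move: g.
apply/(alt_form_eq p_gt0 _ _ _ _); split=> // i.
have [lt_ir | le_ri] := ltnP i r; last first.
  by rewrite sum_even_coef_odd // head0.
have -> : i = w (Ordinal lt_ir) by apply: val_inj.
have [-> | nk] := eqVneq (Ordinal lt_ir) k0; last by rewrite sum_even_coef_w // d_k.
have sum_d : \sum_(k | k != k0) d k = \sum_(k | k != k0) tube_head p_gt0 f (w k).
  by apply: eq_bigr => k /d_k.
by rewrite sum_even_coef_i1 d0 sum_d f_Ga (sum_widen head0) (bigD1 k0) //= addrK.
Qed.

Lemma even_basis_dual_basis : is_Cbar_dual_basis even_basis.
Proof.
split=> [k | f f_Cbar]; first exact: even_basis_Cbar.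
exists [ffun k => if k == k0 then f Ga else tube_head p_gt0 f (w k)]; split.
  apply/even_basis_coords => //; rewrite ffunE eqxx; split=> // k /negbTE nk.
  by rewrite ffunE nk.
move=> d /(even_basis_coords _ f_Cbar)[d0 d_k]; apply/ffunP => k; rewrite ffunE.
by case: eqP => [-> | /eqP /d_k].
Qed.

End EvenTubes.

Theorem proposition3p10 (t : nat) (p : 'I_t -> nat)
  (hp : forall i, (2 <= p i)%N)
  (r : nat) (hr : (r <= t)%N)
  (hpar : forall i : 'I_t, ~~ odd (p i) = (val i < r)%N) :
  (forall hr0 : (0 < r)%N,
     let i1 := widen_ord hr (Ordinal hr0) in
     @is_Cbar_dual_basis t p int 'I_r
       (fun k : 'I_r =>
          if val k == 0%N then pairing (hat_s i1)
          else pairing (fun h => tilde_s (widen_ord hr k) h - tilde_s i1 h)))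
  /\
  (r = 0%N ->
     @is_Cbar_dual_basis t p 'Z_2 'I_2
       (fun k : 'I_2 => if val k == 0%N then @rk2 t p else @deg2 t p)).
Proof.
have p_gt0 i : (0 < p i)%N by apply: leq_trans (hp i).
split=> [r_gt0 | r0]; first exact: (even_basis_dual_basis p_gt0 hr hpar r_gt0).
by apply: rk2_deg2_dual_basis => i; move: (hpar i); rewrite r0 ltn0 => /negbFE.
Qed.
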